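(* For integers $m\ge2$ let $$P(m)=\frac{m}{\sqrt\pi}\int_{-\infty}^{\infty}e^{-t^2}\bigl(1-\Phi(t)\bigr)^{m-1}\,dt.$$ Then $P(m)\le \dfrac{2\pi\sqrt2}{\sqrt{2m+1}}$ for all $m\ge 2$; in particular $P(m)\to0$ as $m\to\infty$.
   Context: $\Phi$ is the standard normal cumulative distribution function. $P(m)$ is the limit as the number of voters tends to infinity of the probability that a Condorcet winner exists among $m$ candidates under the impartial culture (each voter independently picks one of the $m!$ strict rankings uniformly at random). *)

From Stdlib Require Import Reals.
From Coquelicot Require Import Coquelicot.
Open Scope R_scope.

Definition Phi (t : R) : R :=
  / sqrt (2 * PI) *
  RInt_gen (fun x => exp (- x ^ 2 / 2)) (Rbar_locally m_infty) (at_point t).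

Definition P (m : nat) : R :=
  INR m / sqrt PI *
  RInt_gen (fun t => exp (- t ^ 2) * (1 - Phi t) ^ (m - 1))
           (Rbar_locally m_infty) (Rbar_locally p_infty).

From Stdlib Require Import Reals Lra Lia Classical.
From Coquelicot Require Import Coquelicot.
Open Scope R_scope.

(* Write g t = exp (-t^2/2), c = 1/sqrt(2 pi) and u = 1 - Phi, so that u' = - c g and the
   integrand of P (n + 1) is g^2 u^n.  Integrating by parts with (g u^(n+1))' gives
     c (n+1) * int g^2 u^n = - [g u^(n+1)] - int t g u^(n+1).
   The boundary terms vanish at infinity, and AM-GM, 2 |t v| <= lam t^2 + v^2 / lam, bounds the
   last integral by (lam int t^2 g + int g u^(2n+2) / lam) / 2.  Both of these are exact
   derivatives: t^2 g = (int g - t g)' and g u^(2n+2) = - (u^(2n+3))' / (c (2n+3)), while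
   int g <= sqrt 2 pi follows from g <= 1 / (1 + t^2/2) = (sqrt 2 atan (t / sqrt 2))'.
   Choosing lam = 1 / sqrt (2m+1) yields |P m| <= (pi + 2 sqrt pi) / sqrt (2m+1).
   On a bounded interval both steps are done at once, by comparing the integrand with the
   derivative of an explicit function (RInt_near_antiderivative), so that no integration by
   parts theorem is needed. *)

(** * Comparison with antiderivatives and improper integrals *)

Lemma nondecreasing_of_derive_nonneg (D dD : R -> R) (a b : R) : a <= b ->
  (forall x, a <= x <= b -> is_derive D x (dD x)) ->
  (forall x, a <= x <= b -> 0 <= dD x) -> D a <= D b.
Proof.
  intros Hab Hd Hpos.
  destruct (MVT_gen D a b dD) as [x [Hx Heq]];
    rewrite ?Rmin_left, ?Rmax_right in * by lra.
  - intros x Hx; apply Hd; lra.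
  - intros x Hx; apply continuity_pt_filterlim.
    apply (ex_derive_continuous (K := R_AbsRing) (V := R_NormedModule)).
    eexists; apply Hd; lra.
  - assert (0 <= dD x * (b - a)) by (apply Rmult_le_pos; [apply Hpos|]; lra).
    lra.
Qed.

Lemma ex_RInt_of_continuous (f : R -> R) (a b : R) :
  (forall x, continuous f x) -> ex_RInt f a b.
Proof. intros Hf; apply (ex_RInt_continuous (V := R_CompleteNormedModule)); auto. Qed.

Lemma is_derive_RInt_upper (f : R -> R) (a t : R) :
  (forall x, continuous f x) -> is_derive (fun x => RInt f a x) t (f t).
Proof.
  intros Hf; apply (is_derive_RInt f _ a); [|apply Hf].
  apply filter_forall; intros x.
  apply (RInt_correct (V := R_CompleteNormedModule)), ex_RInt_of_continuous, Hf.
Qed.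

Lemma RInt_le_antiderivative (f H h : R -> R) (a b : R) : a <= b ->
  (forall x, continuous f x) ->
  (forall x, a <= x <= b -> is_derive H x (h x)) ->
  (forall x, a <= x <= b -> f x <= h x) -> RInt f a b <= H b - H a.
Proof.
  intros Hab Hf HH Hle.
  assert (Hmono := nondecreasing_of_derive_nonneg
    (fun x => H x - RInt f a x) (fun x => h x - f x) a b Hab).
  simpl in Hmono; rewrite RInt_point in Hmono.
  enough (H a - zero <= H b - RInt f a b) by (unfold zero in *; simpl in *; lra).
  apply Hmono.
  - intros x Hx; apply (is_derive_minus H); [apply HH, Hx | apply is_derive_RInt_upper, Hf].
  - intros x Hx; specialize (Hle x Hx); lra.
Qed.

Lemma RInt_near_antiderivative (f F dF K k : R -> R) (a b : R) : a <= b ->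
  (forall x, continuous f x) ->
  (forall x, a <= x <= b -> is_derive F x (dF x)) ->
  (forall x, a <= x <= b -> is_derive K x (k x)) ->
  (forall x, a <= x <= b -> Rabs (f x - dF x) <= k x) ->
  Rabs (RInt f a b - (F b - F a)) <= K b - K a.
Proof.
  intros Hab Hf HF HK Hclose.
  assert (Hup : RInt f a b <= (F b + K b) - (F a + K a)).
  { apply (RInt_le_antiderivative f (fun x => F x + K x) (fun x => dF x + k x)); auto.
    - intros x Hx; apply (is_derive_plus F K); auto.
    - intros x Hx; specialize (Hclose x Hx); apply Rabs_le_between in Hclose; lra. }
  assert (Hlow : RInt (fun x => - f x) a b <= (K b - F b) - (K a - F a)).
  { apply (RInt_le_antiderivative _ (fun x => K x - F x) (fun x => k x - dF x)); auto.
    - intros x; apply (continuous_opp f), Hf.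
    - intros x Hx; apply (is_derive_minus K F); auto.
    - intros x Hx; specialize (Hclose x Hx); apply Rabs_le_between in Hclose; lra. }
  rewrite (RInt_opp (V := R_CompleteNormedModule)) in Hlow by now apply ex_RInt_of_continuous.
  apply Rabs_le_between; unfold opp in Hlow; simpl in Hlow; lra.
Qed.

Lemma is_RInt_gen_between (f : R -> R) (Fa Fb : (R -> Prop) -> Prop) (l lo hi : R) :
  ProperFilter Fa -> ProperFilter Fb -> is_RInt_gen f Fa Fb l ->
  filter_prod Fa Fb (fun ab => forall y, is_RInt f (fst ab) (snd ab) y -> lo <= y <= hi) ->
  lo <= l <= hi.
Proof.
  intros PFa PFb Hl Hev.
  assert (Hnear : forall P : R -> Prop, locally l P ->
            exists y, P y /\ lo <= y <= hi).
  { intros P HP.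
    assert (HlP := Hl P HP); unfold filtermapi in HlP.
    destruct (filter_ex (F := filter_prod Fa Fb) _ (filter_and _ _ HlP Hev))
      as [ab [[y [Hy HPy]] Hbd]].
    exists y; auto. }
  split; apply Rnot_lt_le; intros Hlt.
  - destruct (Hnear (fun y => y < lo)) as [y [Hy1 Hy2]]; [|lra].
    assert (He : 0 < lo - l) by lra.
    exists (mkposreal _ He); intros y Hy; apply Rabs_lt_between in Hy; simpl in Hy.
    unfold minus, plus, opp in Hy; simpl in Hy; lra.
  - destruct (Hnear (fun y => hi < y)) as [y [Hy1 Hy2]]; [|lra].
    assert (He : 0 < l - hi) by lra.
    exists (mkposreal _ He); intros y Hy; apply Rabs_lt_between in Hy; simpl in Hy.
    unfold minus, plus, opp in Hy; simpl in Hy; lra.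
Qed.

Lemma RInt_nonneg_subinterval_le (f : R -> R) (a a0 b0 b : R) :
  (forall x, continuous f x) -> (forall x, 0 <= f x) ->
  a <= a0 -> a0 <= b0 -> b0 <= b -> RInt f a0 b0 <= RInt f a b.
Proof.
  intros Hf Hpos H1 H2 H3.
  assert (Hex : forall x y, ex_RInt f x y) by (intros; apply ex_RInt_of_continuous, Hf).
  rewrite <- (RInt_Chasles f a a0 b), <- (RInt_Chasles f a0 b0 b) by apply Hex.
  assert (0 <= RInt f a a0) by (apply RInt_ge_0; auto).
  assert (0 <= RInt f b0 b) by (apply RInt_ge_0; auto).
  unfold plus; simpl; lra.
Qed.

(* [B] is the set of upper endpoints allowed by [Fb]: [fun b => b = t] for [at_point t],
   every real for [Rbar_locally p_infty]. *)
Lemma ex_RInt_gen_nonneg_bounded (f : R -> R) (Fb : (R -> Prop) -> Prop)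
    (B : R -> Prop) (M : R) :
  ProperFilter Fb -> Fb B -> (forall b0, B b0 -> Fb (fun b => b0 <= b)) ->
  (forall x, continuous f x) -> (forall x, 0 <= f x) ->
  (forall a b, a <= b -> B b -> RInt f a b <= M) ->
  exists l, is_RInt_gen f (Rbar_locally m_infty) Fb l.
Proof.
  intros PFb HB Hup Hf Hpos HM.
  set (E := fun y => exists a b, a <= b /\ B b /\ y = RInt f a b).
  destruct (completeness E) as [S [HSub HSlub]].
  - exists M; intros y (a & b & Hab & Hb & ->); auto.
  - destruct (filter_ex B HB) as [b Hb].
    exists (RInt f b b), b, b; repeat split; auto; lra.
  - exists S; intros P [eps HP].
    assert (Hclose : exists a0 b0, a0 <= b0 /\ B b0 /\ S - eps < RInt f a0 b0).
    { apply NNPP; intros Hnot.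
      enough (S <= S - eps) by (destruct eps; simpl in *; lra).
      apply HSlub; intros y (a & b & Hab & Hb & ->).
      apply Rnot_lt_le; intros Hlt; apply Hnot; exists a, b; auto. }
    destruct Hclose as (a0 & b0 & Hab0 & Hb0 & Hlt).
    apply (Filter_prod _ _ _ (fun a => a < a0) (fun b => B b /\ b0 <= b)).
    + exists a0; auto.
    + apply filter_and; auto.
    + intros a b Ha [Hb Hb0b]; simpl.
      exists (RInt f a b); split.
      * apply (RInt_correct (V := R_CompleteNormedModule)), ex_RInt_of_continuous, Hf.
      * apply HP; apply Rabs_lt_between.
        assert (RInt f a b <= S) by (apply HSub; exists a, b; repeat split; auto; lra).
        assert (RInt f a0 b0 <= RInt f a b)
          by (apply RInt_nonneg_subinterval_le; auto; lra).
        unfold minus, plus, opp; simpl; lra.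
Qed.

Lemma ex_RInt_gen_R_nonneg_bounded (f : R -> R) (M : R) :
  (forall x, continuous f x) -> (forall x, 0 <= f x) ->
  (forall a b, a <= b -> RInt f a b <= M) ->
  exists l, is_RInt_gen f (Rbar_locally m_infty) (Rbar_locally p_infty) l.
Proof.
  intros Hf Hpos HM.
  apply (ex_RInt_gen_nonneg_bounded f _ (fun _ => True) M); auto; try exact _.
  - exists 0; auto.
  - intros b0 _; exists b0; intros; lra.
Qed.

(** * The Gaussian and its tail *)

Definition gauss (x : R) : R := exp (- x ^ 2 / 2).

Lemma gauss_pos (x : R) : 0 < gauss x.
Proof. apply exp_pos. Qed.

Lemma is_derive_gauss (x : R) : is_derive gauss x (- x * gauss x).
Proof.
  unfold gauss; auto_derive; auto.
  replace (- (x * (x * 1)) * / 2) with (- x ^ 2 / 2) by field; field.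
Qed.

Lemma gauss_continuous (x : R) : continuous gauss x.
Proof.
  apply (ex_derive_continuous (K := R_AbsRing) (V := R_NormedModule)).
  eexists; apply is_derive_gauss.
Qed.

Lemma gauss_le_inv (x : R) : gauss x <= / (1 + x ^ 2 / 2).
Proof.
  unfold gauss; replace (- x ^ 2 / 2) with (- (x ^ 2 / 2)) by field.
  rewrite exp_Ropp; assert (H := exp_ineq1_le (x ^ 2 / 2)).
  assert (0 <= x ^ 2) by apply pow2_ge_0.
  apply Rinv_le_contravar; lra.
Qed.

Lemma gauss_le_inv_of_le_Rabs (r x : R) : 0 < r -> r <= Rabs x -> gauss x <= / r.
Proof.
  intros Hr Hrx; eapply Rle_trans; [apply gauss_le_inv | apply Rinv_le_contravar; auto].
  assert (Hsq : x ^ 2 = Rabs x * Rabs x) by (rewrite <- pow2_abs; ring).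
  nra.
Qed.

Lemma exp_neg_sqr_le_gauss (x : R) : exp (- x ^ 2) <= gauss x.
Proof.
  assert (Hle : - x ^ 2 <= - x ^ 2 / 2) by (assert (0 <= x ^ 2) by apply pow2_ge_0; lra).
  unfold gauss; destruct (Rle_lt_or_eq_dec _ _ Hle) as [Hlt | Heq].
  - apply Rlt_le, exp_increasing, Hlt.
  - rewrite Heq at 1; apply Rle_refl.
Qed.

Lemma RInt_gauss_le (a b : R) : a <= b -> RInt gauss a b <= sqrt 2 * PI.
Proof.
  intros Hab.
  assert (Hs : 0 < sqrt 2) by (apply sqrt_lt_R0; lra).
  assert (Hs2 : sqrt 2 * sqrt 2 = 2) by (apply sqrt_sqrt; lra).
  assert (Hle : RInt gauss a b <=
                sqrt 2 * atan (b / sqrt 2) - sqrt 2 * atan (a / sqrt 2)).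
  { apply (RInt_le_antiderivative _ (fun x => sqrt 2 * atan (x / sqrt 2))
                                   (fun x => / (1 + x ^ 2 / 2))); auto.
    - apply gauss_continuous.
    - intros x _; auto_derive; auto.
      replace (x * / sqrt 2 * (x * / sqrt 2 * 1)) with (x ^ 2 / (sqrt 2 * sqrt 2))
        by (field; lra).
      rewrite Hs2; field; nra.
    - intros x _; apply gauss_le_inv. }
  destruct (atan_bound (b / sqrt 2)), (atan_bound (a / sqrt 2)); nra.
Qed.

Definition gauss_int (t : R) : R :=
  RInt_gen gauss (Rbar_locally m_infty) (at_point t).

Lemma is_RInt_gen_gauss_int (t : R) :
  is_RInt_gen gauss (Rbar_locally m_infty) (at_point t) (gauss_int t).
Proof.
  destruct (ex_RInt_gen_nonneg_bounded gauss (at_point t) (fun b => b = t) (sqrt 2 * PI))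
    as [l Hl]; try exact _.
  - reflexivity.
  - intros b0 ->; apply Rle_refl.
  - apply gauss_continuous.
  - intros x; apply Rlt_le, gauss_pos.
  - intros a b Hab _; apply RInt_gauss_le, Hab.
  - unfold gauss_int; rewrite (is_RInt_gen_unique gauss l Hl); exact Hl.
Qed.

Lemma gauss_int_bounds (t : R) : 0 <= gauss_int t <= sqrt 2 * PI.
Proof.
  apply (is_RInt_gen_between gauss (Rbar_locally m_infty) (at_point t));
    try apply is_RInt_gen_gauss_int; try exact _.
  apply (Filter_prod _ _ _ (fun a => a < t) (fun b => b = t)); try easy.
  - exists t; auto.
  - intros a b Ha -> y Hy; simpl in Hy; rewrite <- (is_RInt_unique _ _ _ _ Hy); split.
    + apply RInt_ge_0; [lra | apply ex_RInt_of_continuous, gauss_continuous |].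
      intros; apply Rlt_le, gauss_pos.
    + apply RInt_gauss_le; lra.
Qed.

Lemma is_derive_gauss_int (t : R) : is_derive gauss_int t (gauss t).
Proof.
  apply (is_derive_ext (fun x => gauss_int 0 + RInt gauss 0 x)).
  - intros x; unfold gauss_int at 2; symmetry.
    apply is_RInt_gen_unique, (is_RInt_gen_Chasles _ 0 _ _ (is_RInt_gen_gauss_int 0)).
    apply is_RInt_gen_at_point, (RInt_correct (V := R_CompleteNormedModule)).
    apply ex_RInt_of_continuous, gauss_continuous.
  - replace (gauss t) with (0 + gauss t) by ring.
    apply (is_derive_plus (fun _ => gauss_int 0)).
    + apply (is_derive_const (K := R_AbsRing) (V := R_NormedModule)).
    + apply is_derive_RInt_upper, gauss_continuous.
Qed.

Definition norm_const : R := / sqrt (2 * PI).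

Lemma norm_const_pos : 0 < norm_const.
Proof. apply Rinv_0_lt_compat, sqrt_lt_R0; assert (H := PI_RGT_0); lra. Qed.

Lemma norm_const_eq : norm_const = / (sqrt 2 * sqrt PI).
Proof. unfold norm_const; rewrite sqrt_mult; auto; assert (H := PI_RGT_0); lra. Qed.

Lemma norm_const_mul_mass : norm_const * (sqrt 2 * PI) = sqrt PI.
Proof.
  assert (H := PI_RGT_0); rewrite norm_const_eq.
  assert (0 < sqrt 2) by (apply sqrt_lt_R0; lra).
  assert (0 < sqrt PI) by (apply sqrt_lt_R0; lra).
  rewrite <- (sqrt_sqrt PI) at 2 by lra; field; lra.
Qed.

Definition tail (t : R) : R := 1 - norm_const * gauss_int t.

Lemma is_derive_tail (t : R) : is_derive tail t (- norm_const * gauss t).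
Proof.
  replace (- norm_const * gauss t) with (0 - norm_const * gauss t) by ring.
  apply (is_derive_minus (fun _ => 1)).
  - apply (is_derive_const (K := R_AbsRing) (V := R_NormedModule)).
  - apply is_derive_scal, is_derive_gauss_int.
Qed.

(* Only the bound sqrt 2 pi on the Gaussian integral is proved here, not its value sqrt (2 pi);
   hence |tail| <= 1 rather than 0 <= tail <= 1. *)
Lemma Rabs_tail_le_1 (t : R) : Rabs (tail t) <= 1.
Proof.
  assert (Hc := norm_const_pos); destruct (gauss_int_bounds t).
  assert (Hmass : norm_const * (sqrt 2 * PI) <= 2).
  { rewrite norm_const_mul_mass, <- (sqrt_pow2 2) by lra.
    apply sqrt_le_1_alt; assert (HPI := PI_4); lra. }
  unfold tail; apply Rabs_le_between; split; nra.
Qed.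

(** * The integrand of P *)

Lemma two_Rabs_mul_le (x y lam : R) : 0 < lam ->
  2 * Rabs (x * y) <= lam * x ^ 2 + y ^ 2 / lam.
Proof.
  intros Hlam.
  assert (Hplus : 0 <= (lam * x + y) ^ 2 / lam)
    by (apply Rdiv_le_0_compat; [apply pow2_ge_0 | exact Hlam]).
  assert (Hminus : 0 <= (lam * x - y) ^ 2 / lam)
    by (apply Rdiv_le_0_compat; [apply pow2_ge_0 | exact Hlam]).
  replace ((lam * x + y) ^ 2 / lam) with (lam * x ^ 2 + y ^ 2 / lam + 2 * (x * y))
    in Hplus by (field; lra).
  replace ((lam * x - y) ^ 2 / lam) with (lam * x ^ 2 + y ^ 2 / lam - 2 * (x * y))
    in Hminus by (field; lra).
  unfold Rabs; destruct (Rcase_abs (x * y)); lra.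
Qed.

Lemma Rabs_pow_le_1 (x : R) (k : nat) : Rabs x <= 1 -> Rabs (x ^ k) <= 1.
Proof.
  intros Hx; rewrite <- RPow_abs, <- (pow1 k).
  apply pow_incr; split; [apply Rabs_pos | exact Hx].
Qed.

Lemma gauss_sqr (t : R) : gauss t ^ 2 = exp (- t ^ 2).
Proof.
  unfold gauss; replace (- t ^ 2) with (- t ^ 2 / 2 + - t ^ 2 / 2) at 2 by field.
  rewrite exp_plus; ring.
Qed.

Definition integrand (n : nat) (t : R) : R := exp (- t ^ 2) * tail t ^ n.

Lemma integrand_continuous (n : nat) (t : R) : continuous (integrand n) t.
Proof.
  apply (ex_derive_continuous (K := R_AbsRing) (V := R_NormedModule)).
  assert (ex_derive tail t) by (eexists; apply is_derive_tail).
  unfold integrand; auto_derive; auto.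
Qed.

Lemma Rabs_integrand_le (n : nat) (t : R) : Rabs (integrand n t) <= gauss t.
Proof.
  unfold integrand; rewrite Rabs_mult, (Rabs_pos_eq (exp _)) by apply Rlt_le, exp_pos.
  assert (Hu := Rabs_pow_le_1 _ n (Rabs_tail_le_1 t)).
  assert (He := exp_pos (- t ^ 2)); assert (Hg := exp_neg_sqr_le_gauss t).
  assert (0 <= Rabs (tail t ^ n)) by apply Rabs_pos.
  nra.
Qed.

(* The integrand is the difference of the nonnegative functions integrand + gauss and gauss. *)
Lemma ex_RInt_gen_integrand (n : nat) :
  exists l, is_RInt_gen (integrand n) (Rbar_locally m_infty) (Rbar_locally p_infty) l.
Proof.
  assert (Hcont : forall x, continuous (fun x => integrand n x + gauss x) x).
  { intros x; apply (continuous_plus (integrand n)).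
    - apply integrand_continuous.
    - apply gauss_continuous. }
  destruct (ex_RInt_gen_R_nonneg_bounded gauss (sqrt 2 * PI)) as [l2 H2].
  - apply gauss_continuous.
  - intros x; apply Rlt_le, gauss_pos.
  - apply RInt_gauss_le.
  - destruct (ex_RInt_gen_R_nonneg_bounded (fun x => integrand n x + gauss x)
                                               (2 * (sqrt 2 * PI))) as [l1 H1]; auto.
    + intros x; assert (H := Rabs_integrand_le n x); apply Rabs_le_between in H; lra.
    + intros a b Hab.
      assert (Hexf : ex_RInt (integrand n) a b)
        by apply ex_RInt_of_continuous, integrand_continuous.
      assert (Hexg : ex_RInt gauss a b) by apply ex_RInt_of_continuous, gauss_continuous.
      rewrite (RInt_plus (V := R_CompleteNormedModule)) by assumption.
      assert (RInt (integrand n) a b <= RInt gauss a b).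
      { apply RInt_le; auto; intros x _.
        assert (H := Rabs_integrand_le n x); apply Rabs_le_between in H; lra. }
      assert (Hmass := RInt_gauss_le a b Hab); unfold plus; simpl; lra.
    + exists (minus l1 l2).
      eapply is_RInt_gen_ext; [| exact (is_RInt_gen_minus _ _ _ _ H1 H2)].
      apply filter_forall; intros [a b] x _; unfold minus, plus, opp; simpl; ring.
Qed.

Section Integration_by_parts.

Variables (n : nat) (lam : R).
Hypothesis lam_pos : 0 < lam.

Let M := INR (S n).

Let M_pos : 0 < M.
Proof. apply lt_0_INR; lia. Qed.

Definition boundary_term (t : R) : R :=
  - gauss t * tail t ^ S n / (M * norm_const).

Definition remainder_majorant (t : R) : R :=
  (lam * (gauss_int t - t * gauss t)
   - (tail t ^ S n) ^ 2 * tail t / (norm_const * (2 * M + 1) * lam))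
  / (2 * M * norm_const).

Lemma is_derive_boundary_term (t : R) :
  is_derive boundary_term t
    (gauss t ^ 2 * tail t ^ n + t * gauss t * tail t ^ S n / (M * norm_const)).
Proof.
  assert (HM := M_pos); assert (Hc := norm_const_pos).
  assert (ex_derive gauss t) by (eexists; apply is_derive_gauss).
  assert (ex_derive tail t) by (eexists; apply is_derive_tail).
  unfold boundary_term; auto_derive; [repeat split; auto|].
  replace (Derive (fun x => gauss x) t) with (- t * gauss t)
    by (symmetry; apply is_derive_unique, is_derive_gauss).
  replace (Derive (fun x => tail x) t) with (- norm_const * gauss t)
    by (symmetry; apply is_derive_unique, is_derive_tail).
  change (match n with 0%nat => 1 | S _ => INR n + 1 end) with M.
  change (tail t ^ S n) with (tail t * tail t ^ n).
  field; lra.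
Qed.

Lemma is_derive_remainder_majorant (t : R) :
  is_derive remainder_majorant t
    (gauss t * (lam * t ^ 2 + (tail t ^ S n) ^ 2 / lam) / (2 * M * norm_const)).
Proof.
  assert (HM := M_pos); assert (Hc := norm_const_pos).
  assert (ex_derive gauss t) by (eexists; apply is_derive_gauss).
  assert (ex_derive tail t) by (eexists; apply is_derive_tail).
  assert (ex_derive gauss_int t) by (eexists; apply is_derive_gauss_int).
  unfold remainder_majorant; auto_derive; [repeat split; auto|].
  replace (Derive (fun x => gauss x) t) with (- t * gauss t)
    by (symmetry; apply is_derive_unique, is_derive_gauss).
  replace (Derive (fun x => tail x) t) with (- norm_const * gauss t)
    by (symmetry; apply is_derive_unique, is_derive_tail).
  replace (Derive (fun x => gauss_int x) t) with (gauss t)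
    by (symmetry; apply is_derive_unique, is_derive_gauss_int).
  change (match n with 0%nat => 1 | S _ => INR n + 1 end) with M.
  change (tail t ^ S n) with (tail t * tail t ^ n).
  field; lra.
Qed.

Lemma integrand_near_boundary_derivative (t : R) :
  Rabs (integrand n t -
        (gauss t ^ 2 * tail t ^ n + t * gauss t * tail t ^ S n / (M * norm_const)))
  <= gauss t * (lam * t ^ 2 + (tail t ^ S n) ^ 2 / lam) / (2 * M * norm_const).
Proof.
  assert (HM := M_pos); assert (Hc := norm_const_pos); assert (Hg := gauss_pos t).
  unfold integrand; rewrite <- gauss_sqr.
  replace (gauss t ^ 2 * tail t ^ n -
           (gauss t ^ 2 * tail t ^ n + t * gauss t * tail t ^ S n / (M * norm_const)))
    with (- (gauss t / (2 * M * norm_const)) * (2 * (t * tail t ^ S n)))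
    by (field; repeat split; lra).
  assert (Hk : 0 < gauss t / (2 * M * norm_const)) by (apply Rdiv_lt_0_compat; nra).
  rewrite Rabs_mult, Rabs_Ropp, Rabs_mult, (Rabs_pos_eq 2), Rabs_pos_eq by lra.
  replace (gauss t * (lam * t ^ 2 + (tail t ^ S n) ^ 2 / lam) / (2 * M * norm_const))
    with (gauss t / (2 * M * norm_const) * (lam * t ^ 2 + (tail t ^ S n) ^ 2 / lam))
    by (field; repeat split; lra).
  apply Rmult_le_compat_l; [lra | now apply two_Rabs_mul_le].
Qed.

Lemma Rabs_boundary_term_le (t : R) :
  Rabs (boundary_term t) <= gauss t / (M * norm_const).
Proof.
  assert (HMc : 0 < M * norm_const)
    by (apply Rmult_lt_0_compat; [apply M_pos | apply norm_const_pos]).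
  assert (Hg := gauss_pos t); assert (Hu := Rabs_pow_le_1 _ (S n) (Rabs_tail_le_1 t)).
  unfold boundary_term, Rdiv.
  rewrite !Rabs_mult, Rabs_Ropp, (Rabs_pos_eq (gauss t)), (Rabs_pos_eq (/ _)) by
    (try apply Rlt_le, Rinv_0_lt_compat; lra).
  apply Rmult_le_compat_r; [apply Rlt_le, Rinv_0_lt_compat, HMc|].
  rewrite <- (Rmult_1_r (gauss t)) at 2; apply Rmult_le_compat_l; lra.
Qed.

Lemma remainder_majorant_increment_le (a b : R) : a <= 0 <= b ->
  remainder_majorant b - remainder_majorant a <=
  (lam * (sqrt 2 * PI) + 2 / (norm_const * (2 * M + 1) * lam)) / (2 * M * norm_const).
Proof.
  intros Hab.
  assert (HM := M_pos); assert (Hc := norm_const_pos).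
  assert (Hw : (gauss_int b - b * gauss b) - (gauss_int a - a * gauss a) <= sqrt 2 * PI).
  { destruct (gauss_int_bounds a), (gauss_int_bounds b).
    assert (0 <= b * gauss b) by (apply Rmult_le_pos; [lra | apply Rlt_le, gauss_pos]).
    assert (a * gauss a <= 0) by (apply Rmult_le_0_r; [lra | apply Rlt_le, gauss_pos]).
    lra. }
  assert (Hz : forall t, Rabs ((tail t ^ S n) ^ 2 * tail t) <= 1).
  { intros t; replace ((tail t ^ S n) ^ 2 * tail t) with (tail t ^ (S n * 2 + 1))
      by (rewrite pow_add, pow_mult; ring).
    apply Rabs_pow_le_1, Rabs_tail_le_1. }
  assert (Hden : 0 < norm_const * (2 * M + 1) * lam)
    by (apply Rmult_lt_0_compat; [apply Rmult_lt_0_compat|]; lra).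
  assert (Hza := Hz a); assert (Hzb := Hz b).
  apply Rabs_le_between in Hza; apply Rabs_le_between in Hzb.
  unfold remainder_majorant, Rdiv.
  apply Rle_trans with ((lam * (sqrt 2 * PI) + 2 * / (norm_const * (2 * M + 1) * lam))
                        * / (2 * M * norm_const)); [| right; reflexivity].
  rewrite <- Rmult_minus_distr_r.
  apply Rmult_le_compat_r; [apply Rlt_le, Rinv_0_lt_compat; nra|].
  assert (0 < / (norm_const * (2 * M + 1) * lam)) by (apply Rinv_0_lt_compat; lra).
  nra.
Qed.

Lemma Rabs_RInt_integrand_le (a b : R) : a <= 0 <= b ->
  Rabs (RInt (integrand n) a b) <=
  (gauss a + gauss b + lam * (sqrt 2 * PI) / 2
   + / (norm_const * (2 * M + 1) * lam)) / (M * norm_const).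
Proof.
  intros Hab.
  assert (HM := M_pos); assert (Hc := norm_const_pos).
  assert (Hnear := RInt_near_antiderivative (integrand n) boundary_term _
    remainder_majorant _ a b ltac:(lra) (integrand_continuous n)
    (fun t _ => is_derive_boundary_term t) (fun t _ => is_derive_remainder_majorant t)
    (fun t _ => integrand_near_boundary_derivative t)).
  assert (Hba : Rabs (boundary_term b - boundary_term a)
                <= Rabs (boundary_term b) + Rabs (boundary_term a)).
  { unfold Rminus; rewrite <- (Rabs_Ropp (boundary_term a)); apply Rabs_triang. }
  assert (Ha := Rabs_boundary_term_le a); assert (Hb := Rabs_boundary_term_le b).
  assert (Hrem := remainder_majorant_increment_le a b Hab).
  assert (Htri := Rabs_triang_inv (RInt (integrand n) a b)
                                  (boundary_term b - boundary_term a)).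
  replace ((gauss a + gauss b + lam * (sqrt 2 * PI) / 2 + / (norm_const * (2 * M + 1) * lam))
           / (M * norm_const))
    with (gauss a / (M * norm_const) + gauss b / (M * norm_const)
          + (lam * (sqrt 2 * PI) + 2 / (norm_const * (2 * M + 1) * lam)) / (2 * M * norm_const))
    by (field; repeat split; lra).
  lra.
Qed.

Lemma Rabs_RInt_gen_integrand_le (l : R) :
  is_RInt_gen (integrand n) (Rbar_locally m_infty) (Rbar_locally p_infty) l ->
  Rabs l <= (lam * (sqrt 2 * PI) / 2 + / (norm_const * (2 * M + 1) * lam))
            / (M * norm_const).
Proof.
  intros Hl; apply Rle_plus_epsilon; intros eps Heps.
  assert (HM := M_pos); assert (Hc := norm_const_pos).
  assert (HMc : 0 < M * norm_const) by (apply Rmult_lt_0_compat; lra).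
  set (d := eps * (M * norm_const)).
  assert (Hd : 0 < d) by (apply Rmult_lt_0_compat; lra).
  assert (H2d : 0 < 2 / d) by (apply Rdiv_lt_0_compat; lra).
  assert (Hsmall : forall t, 2 / d < Rabs t -> gauss t <= d / 2).
  { intros t Ht; replace (d / 2) with (/ (2 / d)) by (field; lra).
    apply gauss_le_inv_of_le_Rabs; lra. }
  apply Rabs_le_between, (is_RInt_gen_between (integrand n)
    (Rbar_locally m_infty) (Rbar_locally p_infty) l); try exact _; auto.
  apply (Filter_prod _ _ _ (fun a => a < - (2 / d)) (fun b => 2 / d < b)).
  - exists (- (2 / d)); auto.
  - exists (2 / d); auto.
  - intros a b Ha Hb y Hy; simpl in Hy; rewrite <- (is_RInt_unique _ _ _ _ Hy).
    assert (Hga : gauss a <= d / 2) by (apply Hsmall; rewrite Rabs_left; lra).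
    assert (Hgb : gauss b <= d / 2) by (apply Hsmall; rewrite Rabs_right; lra).
    apply Rabs_le_between; eapply Rle_trans; [apply Rabs_RInt_integrand_le; lra|].
    set (X := lam * (sqrt 2 * PI) / 2 + / (norm_const * (2 * M + 1) * lam)).
    replace ((gauss a + gauss b + lam * (sqrt 2 * PI) / 2
              + / (norm_const * (2 * M + 1) * lam)) / (M * norm_const))
      with ((gauss a + gauss b) / (M * norm_const) + X / (M * norm_const))
      by (unfold X; field; repeat split; lra).
    assert ((gauss a + gauss b) / (M * norm_const) <= eps)
      by (apply Rle_div_l; [lra | unfold d in *; lra]).
    lra.
Qed.

End Integration_by_parts.

(** * The bound on P *)

Lemma P_S_eq (n : nat) (l : R) :
  is_RInt_gen (integrand n) (Rbar_locally m_infty) (Rbar_locally p_infty) l ->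
  P (S n) = INR (S n) / sqrt PI * l.
Proof.
  intros Hl; unfold P; replace (S n - 1)%nat with n by lia.
  change (fun t => exp (- t ^ 2) * (1 - Phi t) ^ n) with (integrand n).
  now rewrite (is_RInt_gen_unique _ _ Hl).
Qed.

Lemma Rabs_P_le (m : nat) : Rabs (P m) <= (PI + 2 * sqrt PI) / sqrt (2 * INR m + 1).
Proof.
  assert (HPI := PI_RGT_0).
  assert (Hsq : 1 <= sqrt (2 * INR m + 1)).
  { rewrite <- sqrt_1 at 1; apply sqrt_le_1_alt; assert (H := pos_INR m); lra. }
  assert (Hbound : 0 <= (PI + 2 * sqrt PI) / sqrt (2 * INR m + 1)).
  { apply Rdiv_le_0_compat; [| lra]. assert (H := sqrt_pos PI); lra. }
  destruct m as [|n].
  - unfold P; simpl INR; rewrite Rdiv_0_l, Rmult_0_l, Rabs_R0; exact Hbound.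
  - destruct (ex_RInt_gen_integrand n) as [l Hl]; rewrite (P_S_eq n l Hl).
    set (M := INR (S n)) in *; set (s := sqrt (2 * M + 1)) in *.
    assert (HM : 0 < M) by (apply lt_0_INR; lia).
    assert (Hl_le := Rabs_RInt_gen_integrand_le n (/ s)
                       ltac:(apply Rinv_0_lt_compat; lra) l Hl).
    fold M in Hl_le.
    assert (Hq : 0 < sqrt PI) by (apply sqrt_lt_R0, HPI).
    rewrite Rabs_mult, (Rabs_pos_eq (M / sqrt PI)) by (apply Rlt_le, Rdiv_lt_0_compat; lra).
    eapply Rle_trans;
      [apply Rmult_le_compat_l; [apply Rlt_le, Rdiv_lt_0_compat; lra | exact Hl_le]|].
    right.
    assert (Hs2 : s * s = 2 * M + 1) by (apply sqrt_sqrt; lra).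
    assert (Hr : 0 < sqrt 2) by (apply sqrt_lt_R0; lra).
    rewrite norm_const_eq, <- Hs2.
    field_simplify; [| repeat split; lra ..].
    rewrite pow2_sqrt by lra; field; lra.
Qed.

Lemma PI_plus_2_sqrt_PI_le : PI + 2 * sqrt PI <= 2 * PI * sqrt 2.
Proof.
  assert (HPI3 := PI2_3_2); assert (HPI4 := PI_4).
  assert (Hq : sqrt PI <= 2).
  { rewrite <- (sqrt_pow2 2) by lra; apply sqrt_le_1_alt; lra. }
  assert (Hr : 0 <= sqrt 2) by apply sqrt_pos.
  assert (Hr2 : sqrt 2 * sqrt 2 = 2) by (apply sqrt_sqrt; lra).
  assert (Hr14 : 1.4 <= sqrt 2) by nra.
  nra.
Qed.

Lemma is_lim_seq_div_sqrt (C : R) :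
  is_lim_seq (fun m => C / sqrt (2 * INR m + 1)) 0.
Proof.
  assert (Hsqrt : is_lim_seq (fun m => sqrt (2 * INR m + 1)) p_infty).
  { apply (filterlim_comp _ _ _ (fun m => 2 * INR m + 1) sqrt _ (Rbar_locally p_infty)).
    - apply (is_lim_seq_le_p_loc INR); [| apply is_lim_seq_INR].
      exists 0%nat; intros m _; assert (H := pos_INR m); lra.
    - apply filterlim_sqrt_p. }
  assert (Hinv := is_lim_seq_inv _ _ Hsqrt ltac:(easy)).
  assert (H := is_lim_seq_scal_l _ C _ Hinv); simpl in H; rewrite Rmult_0_r in H.
  exact H.
Qed.

Theorem mainTheorem5 :
  (forall m : nat, (2 <= m)%nat ->
     P m <= 2 * PI * sqrt 2 / sqrt (2 * INR m + 1))
  /\ is_lim_seq P 0.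
Proof.
  split.
  - intros m _.
    apply Rle_trans with ((PI + 2 * sqrt PI) / sqrt (2 * INR m + 1)).
    + eapply Rle_trans; [apply Rle_abs | apply Rabs_P_le].
    + apply Rmult_le_compat_r; [| apply PI_plus_2_sqrt_PI_le].
      apply Rlt_le, Rinv_0_lt_compat, sqrt_lt_R0; assert (H := pos_INR m); lra.
  - apply is_lim_seq_abs_0.
    apply (is_lim_seq_le_le _ _ _ _ (fun m => conj (Rabs_pos (P m)) (Rabs_P_le m))).
    + apply is_lim_seq_const.
    + apply is_lim_seq_div_sqrt.
Qed.
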